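(* Let $S$ be a finite Rhodes semisimple semigroup and let $\Omega$ be a finite semisimple partial $S$-set. Then the action of $S$ on $\Omega$ is faithful if and only if, for each $\mathsf{RM}$-irreducible $\mathscr J$-class $J$ of $S$: (1) $\Omega_J\neq\emptyset$; and (2) $\Omega_Je_J$ is a faithful $M_J$-set.
   Context: All semigroups are finite and act on the right. $\mathscr J$-classes are ordered by $J'\le J$ iff $S^1J'S^1\subseteq S^1JS^1$; a $\mathscr J$-class is regular if it contains an idempotent. For each regular $\mathscr J$-class $J$ fix an idempotent $e_J\in J$ and let $G_J$ be its maximal subgroup. For a regular $\mathscr J$-class $J$: $s\equiv_J t$ iff for all $x,y\in J$, $xsy\in J\iff xty\in J$, and if both lie in $J$ then $xsy=xty$; $s\equiv_{\mathsf{RM},J}t$ iff for all $x\in J$, $xs\in J\iff xt\in J$, and if both lie in $J$ then $xs=xt$. $S$ is Rhodes semisimple if $\bigcap_J\equiv_J$ (over regular $J$) is the equality relation. A regular $J$ is $\mathsf{RM}$-irreducible if $\bigcap_{J'<J}\equiv_{\mathsf{RM},J'}\not\subseteq\equiv_{\mathsf{RM},J}$ (over regular $J'<J$; empty intersection is universal). For such $J$, $M_J=\{g\in G_J\mid g\equiv_{\mathsf{RM},J'}e_J\ \forall\text{ regular }J'<J\}$. A partial $S$-set is a finite set $\Omega$ with a right action of $S$ by partial maps (equalities of possibly undefined expressions mean both undefined or both defined and equal); it is faithful if distinct elements act as distinct partial maps. The strong orbit of $\alpha$ is $\{\beta\in\Omega\mid \alpha S^1=\beta S^1\}$; it is null if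 $\mathscr O S\cap\mathscr O=\emptyset$ and transitive otherwise. $\Omega$ is semisimple if every strong orbit is transitive and $S$-invariant (if $\alpha\in\mathscr O$ and $\alpha s$ is defined then $\alpha s\in\mathscr O$). Each such strong orbit $\mathscr O$ is a partial $S$-set in its own right, and there is a unique minimal $\mathscr J$-class $J$ with $\mathscr O s\neq\emptyset$ for some $s\in J$; it is regular and called the apex of $\mathscr O$. $\Omega_J$ denotes the union of the strong orbits with apex $J$, and $\Omega_Je_J=\{\alpha e_J\mid\alpha\in\Omega_J,\ \alpha e_J \text{ defined}\}$, on which $G_J$ acts by permutations. *)

From mathcomp Require Import all_boot.
Set Implicit Arguments. Unset Strict Implicit. Unset Printing Implicit Defensive.

Record fsemigroup := FSemigroup {
  fs_sort :> finType;
  fs_mul : fs_sort -> fs_sort -> fs_sort;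
  fs_assoc : associative fs_mul }.

Section SemigroupDefs.
Context (S : fsemigroup).
Local Notation m := (@fs_mul S).

Definition ideal1 (s : S) : {set S} :=
  [set u | [|| u == s, [exists x, u == m x s], [exists x, u == m s x]
           | [exists x, exists y, u == m (m x s) y]]].
Definition rideal1 (s : S) : {set S} := [set u | (u == s) || [exists x, u == m s x]].
Definition lideal1 (s : S) : {set S} := [set u | (u == s) || [exists x, u == m x s]].

Definition jclass (s : S) : {set S} := [set t | ideal1 t == ideal1 s].
Definition is_jclass (J : {set S}) : bool := [exists s, J == jclass s].
Definition jle (J' J : {set S}) : bool :=
  [forall a in J', forall b in J, ideal1 a \subset ideal1 b].
Definition jlt (J' J : {set S}) : bool := jle J' J && (J' != J).
Definition regular (J : {set S}) : bool := is_jclass J && [exists x in J, m x x == x].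

(* maximal subgroup at an idempotent e: its H-class *)
Definition maxsubgroup (e : S) : {set S} :=
  [set g | (rideal1 g == rideal1 e) && (lideal1 g == lideal1 e)].

Definition equivJ (J : {set S}) (s t : S) : bool :=
  [forall x in J, forall y in J,
     ((m (m x s) y \in J) == (m (m x t) y \in J)) &&
     ((m (m x s) y \in J) ==> (m (m x s) y == m (m x t) y))].

Definition equivRM (J : {set S}) (s t : S) : bool :=
  [forall x in J, ((m x s \in J) == (m x t \in J)) &&
                  ((m x s \in J) ==> (m x s == m x t))].

Definition rhodes_semisimple : Prop :=
  forall s t : S, (forall J, regular J -> equivJ J s t) -> s = t.

Definition RM_irreducible (J : {set S}) : bool :=
  regular J &&
  [exists s, exists t,
     [forall J' : {set S}, (regular J' && jlt J' J) ==> equivRM J' s t]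
     && ~~ equivRM J s t].

Definition MJ (J : {set S}) (eJ : S) : {set S} :=
  [set g in maxsubgroup eJ |
     [forall J' : {set S}, (regular J' && jlt J' J) ==> equivRM J' g eJ]].

Section PartialAct.
Context (Omega : finType) (act : Omega -> S -> option Omega).

Definition is_partial_act : Prop :=
  forall a s t, act a (m s t) = obind (fun b => act b t) (act a s).

Definition faithful_act : Prop :=
  forall s t : S, (forall a, act a s = act a t) -> s = t.

Definition reachset (a : Omega) : {set Omega} :=
  [set b | (b == a) || [exists s, act a s == Some b]].
Definition sorbit (a : Omega) : {set Omega} :=
  [set b | reachset b == reachset a].

Definition orbit_transitive (O : {set Omega}) : bool :=
  [exists a in O, exists s, exists b in O, act a s == Some b].
Definition orbit_invariant (O : {set Omega}) : bool :=
  [forall a in O, forall s, forall b, (act a s == Some b) ==> (b \in O)].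
Definition semisimple_act : Prop :=
  forall a, orbit_transitive (sorbit a) && orbit_invariant (sorbit a).

Definition acts_nontrivially (O : {set Omega}) (J : {set S}) : bool :=
  [exists s in J, exists a in O, act a s != None].
Definition apex (O : {set Omega}) (J : {set S}) : bool :=
  [&& is_jclass J, acts_nontrivially O J &
   [forall J' : {set S}, [&& is_jclass J', acts_nontrivially O J' & jle J' J]
                         ==> (J' == J)]].

Definition OmegaJ (J : {set S}) : {set Omega} := [set a | apex (sorbit a) J].
Definition OmegaJ_e (J : {set S}) (eJ : S) : {set Omega} :=
  [set b | [exists a in OmegaJ J, act a eJ == Some b]].

Definition faithful_on (A : {set S}) (X : {set Omega}) : Prop :=
  forall g h, g \in A -> h \in A -> (forall b, b \in X -> act b g = act b h) -> g = h.

End PartialAct.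
End SemigroupDefs.

(* Finite semigroups are stable: if x = p x b q then x = x (b q)^n for some
   n, so x and x b are R-equivalent as soon as they are J-equivalent (and
   dually for L). A point fixed by k is fixed by an idempotent power of k,
   so each strong orbit of a semisimple partial S-set has a regular apex J_O;
   elements J-below J_O but outside it act as the empty map on the orbit, and
   elements that are RM-equivalent at J_O act identically on it.

   If S acts faithfully and J is RM-irreducible, two elements that are
   RM-equivalent below J but not at J act identically on every orbit whose
   apex is not J; hence orbits with apex J exist, and for the same reason
   elements of M_J are only told apart on Omega_J e_J.

   Conversely, for s <> t pick J minimal among the regular J-classes at which
   s and t are not RM-equivalent (Rhodes semisimplicity provides one); J is
   RM-irreducible. Some x in J either sends exactly one of x s, x t out of J,
   which an orbit with apex J detects, or gives distinct u = x s, v = x t in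
   J. Then Rhodes semisimplicity and the minimality of J give x', y in J with
   x' u y <> x' v y; either exactly one of them lies in J, or both lie in one
   H-class and Green's lemma transports them to e_J and an element g <> e_J
   of M_J, whose action on Omega_J e_J separates u and v. *)

From mathcomp Require Import all_boot.
Set Implicit Arguments. Unset Strict Implicit. Unset Printing Implicit Defensive.

Section Semigroup.
Variable S : fsemigroup.
Local Notation m := (@fs_mul S).

(* [spow k n] is k^(n+1): a semigroup has no unit to start from. *)
Definition spow (k : S) (n : nat) : S := iter n (fun x => m x k) k.

Lemma spowS k n : spow k n.+1 = m (spow k n) k. Proof. by []. Qed.

Lemma spowD k a b : m (spow k a) (spow k b) = spow k (a + b).+1.
Proof.
elim: b => [|b IHb]; first by rewrite addn0.
by rewrite spowS fs_assoc IHb addnS.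
Qed.

Lemma mul_spow k n : m k (spow k n) = spow k n.+1.
Proof. exact: (spowD k 0 n). Qed.

Lemma spow_cycle k : exists i P, 0 < P /\ spow k (i + P) = spow k i.
Proof.
pose f (i : 'I_#|S|.+1) := spow k i.
have /injectivePn [i [j neq_ij eq_fij]] : ~~ injectiveb f.
  by apply/injectiveP => /leq_card; rewrite card_ord ltnn.
rewrite /f in eq_fij; case: (ltngtP i j) => [lt_ij|lt_ji|/val_inj eq_ij].
- by exists i, (j - i); rewrite subn_gt0 lt_ij subnKC ?(ltnW lt_ij).
- by exists j, (i - j); rewrite subn_gt0 lt_ji subnKC ?(ltnW lt_ji).
- by rewrite eq_ij eqxx in neq_ij.
Qed.

Lemma spow_periodic k i P : spow k (i + P) = spow k i ->
  forall n d, i <= n -> spow k (n + d * P) = spow k n.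
Proof.
move=> per n d le_in.
have shift c : i <= c -> spow k (c + P) = spow k c.
  move=> /subnKC <-; case: (c - i) => [|c']; first by rewrite addn0.
  by rewrite addnAC addnS -spowD per spowD addnS.
elim: d => [|d IHd]; first by rewrite addn0.
by rewrite mulSn (addnC P) addnA shift ?IHd // (leq_trans le_in) ?leq_addr.
Qed.

Lemma idempotent_spow k : exists n, m (spow k n) (spow k n) = spow k n.
Proof.
have [i [P [P_gt0 per]]] := spow_cycle k.
have le_in : i <= (P * i.+1).-1.
  by rewrite -ltnS prednK ?muln_gt0 ?P_gt0 // leq_pmull.
exists (P * i.+1).-1; rewrite spowD.
have -> : ((P * i.+1).-1 + (P * i.+1).-1).+1 = (P * i.+1).-1 + i.+1 * P.
  by rewrite -addnS prednK ?muln_gt0 ?P_gt0 // mulnC.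
exact: spow_periodic per _ _ le_in.
Qed.

Lemma fixed_spow p v x : x = m (m p x) v ->
  forall n, x = m (m (spow p n) x) (spow v n).
Proof.
move=> fix_x; elim=> [|n IHn] //.
by rewrite {1}fix_x {1}IHn -mul_spow spowS !fs_assoc.
Qed.

Lemma fixed_mulr p v x : x = m (m p x) v -> exists n, x = m x (spow v n).
Proof.
move=> fix_x; have [i [P [P_gt0 per]]] := spow_cycle v.
have fix_i := fixed_spow fix_x i.
exists P.-1; rewrite {1}fix_i -per -(prednK P_gt0) addnS -spowD.
by rewrite !fs_assoc -fix_i.
Qed.

Lemma fixed_mull p v x : x = m (m p x) v -> exists n, x = m (spow p n) x.
Proof.
move=> fix_x; have [i [P [P_gt0 per]]] := spow_cycle p.
have fix_i := fixed_spow fix_x i.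
exists P.-1; rewrite {1}fix_i -per -{1}(prednK P_gt0) addnS addnC -spowD.
by rewrite [in RHS]fix_i !fs_assoc.
Qed.

(* [option S] is the monoid S^1, [None] being the adjoined unit. *)
Definition omul (a b : option S) : option S :=
  match a, b with
  | Some a, Some b => Some (m a b)
  | None, _ => b
  | _, None => a
  end.
Local Infix "**" := omul (at level 40, left associativity).

Lemma omulA : associative omul.
Proof. by case=> [a|] [b|] [c|] //=; rewrite fs_assoc. Qed.

Lemma omulo1 o : o ** None = o. Proof. by case: o. Qed.

Lemma omulSl a o : exists z, Some a ** o = Some z.
Proof. by case: o => [b|]; eexists. Qed.

Lemma omulSr a o : exists z, o ** Some a = Some z.
Proof. by case: o => [b|]; eexists. Qed.

Definition leJ (u s : S) := exists a b, Some u = a ** Some s ** b.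
Definition leR (u s : S) := exists b, Some u = Some s ** b.
Definition leL (u s : S) := exists a, Some u = a ** Some s.

Lemma leJ_refl u : leJ u u. Proof. by exists None, None. Qed.

Lemma leJ_trans u v w : leJ u v -> leJ v w -> leJ u w.
Proof.
move=> [a [b Eu]] [c [d Ev]]; exists (a ** c), (d ** b).
by rewrite Eu Ev !omulA.
Qed.

Lemma leR_refl u : leR u u. Proof. by exists None. Qed.

Lemma leR_trans u v w : leR u v -> leR v w -> leR u w.
Proof. by move=> [b Eu] [d Ev]; exists (d ** b); rewrite Eu Ev omulA. Qed.

Lemma leL_trans u v w : leL u v -> leL v w -> leL u w.
Proof. by move=> [a Eu] [c Ev]; exists (a ** c); rewrite Eu Ev omulA. Qed.

Lemma leR_leJ u v : leR u v -> leJ u v.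
Proof. by move=> [b E]; exists None, b. Qed.

Lemma leJ_spow k n : leJ (spow k n) k.
Proof. by case: n => [|n]; [exact: leJ_refl | exists (Some (spow k n)), None]. Qed.

Lemma fixed_omulr p x c : Some x = p ** Some x ** c ->
  exists d, Some x = Some x ** c ** d.
Proof.
case: p c => [p|] [c|] /=; try by move=> E; exists None; rewrite /= ?omulo1.
case=> fix_x.
have [[|n] En] := fixed_mulr fix_x; first by exists None; rewrite {1}En.
by exists (Some (spow c n)); rewrite {1}En /= -fs_assoc mul_spow.
Qed.

Lemma fixed_omull p x c : Some x = p ** Some x ** c ->
  exists d, Some x = d ** p ** Some x.
Proof.
case: p c => [p|] [c|] /=; try by move=> E; exists None.
case=> fix_x.
have [[|n] En] := fixed_mull fix_x; first by exists None; rewrite {1}En.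
by exists (Some (spow p n)); rewrite {1}En.
Qed.

Lemma stabilityR x y b : Some y = Some x ** b -> leJ x y -> leR x y.
Proof.
move=> Ey [p [q Ex]].
have /fixed_omulr [d Ed] : Some x = p ** Some x ** (b ** q).
  by rewrite {1}Ex Ey !omulA.
by exists (q ** d); rewrite Ed Ey !omulA.
Qed.

Lemma stabilityL x y a : Some y = a ** Some x -> leJ x y -> leL x y.
Proof.
move=> Ey [p [q Ex]].
have /fixed_omull [d Ed] : Some x = (p ** a) ** Some x ** q.
  by rewrite {1}Ex Ey !omulA.
by exists (d ** p); rewrite Ed Ey !omulA.
Qed.

Lemma ideal1P u s : reflect (leJ u s) (u \in ideal1 s).
Proof.
rewrite inE; apply: (iffP or4P).
  case=> [/eqP->|/existsP[x /eqP->]|/existsP[x /eqP->]|/existsP[x /existsP[y /eqP->]]].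
  - exact: leJ_refl.
  - by exists (Some x), None.
  - by exists None, (Some x).
  - by exists (Some x), (Some y).
case=> [[x|] [[y|] /= [->]]].
- by apply: Or44; apply/existsP; exists x; apply/existsP; exists y.
- by apply: Or42; apply/existsP; exists x.
- by apply: Or43; apply/existsP; exists y.
- exact: Or41.
Qed.

Lemma rideal1P u s : reflect (leR u s) (u \in rideal1 s).
Proof.
rewrite inE; apply: (iffP orP).
  by case=> [/eqP->|/existsP[x /eqP->]]; [exact: leR_refl | exists (Some x)].
by case=> [[x|] [->]]; [right; apply/existsP; exists x | left].
Qed.

Lemma lideal1P u s : reflect (leL u s) (u \in lideal1 s).
Proof.
rewrite inE; apply: (iffP orP).
  by case=> [/eqP->|/existsP[x /eqP->]]; [exists None | exists (Some x)].
by case=> [[x|] [->]]; [right; apply/existsP; exists x | left].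
Qed.

Lemma sub_ideal1P u s : reflect (leJ u s) (ideal1 u \subset ideal1 s).
Proof.
apply: (iffP subsetP) => [sub_us | le_us w /ideal1P le_wu].
  by apply/ideal1P/sub_us/ideal1P/leJ_refl.
exact/ideal1P/(leJ_trans le_wu).
Qed.

Lemma eq_rideal1 u s : leR u s -> leR s u -> rideal1 u = rideal1 s.
Proof.
move=> le_us le_su; apply/setP => w.
by apply/rideal1P/rideal1P => /leR_trans; apply.
Qed.

Lemma eq_lideal1 u s : leL u s -> leL s u -> lideal1 u = lideal1 s.
Proof.
move=> le_us le_su; apply/setP => w.
by apply/lideal1P/lideal1P => /leL_trans; apply.
Qed.

Lemma mem_jclass (t s : S) : t \in jclass s <-> leJ t s /\ leJ s t.
Proof.
rewrite inE eqEsubset; split; first by case/andP => /sub_ideal1P ? /sub_ideal1P.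
by case=> /sub_ideal1P -> /sub_ideal1P ->.
Qed.

Lemma jclass_refl (s : S) : s \in jclass s. Proof. by rewrite inE. Qed.

Lemma is_jclass_jclass (s : S) : is_jclass (jclass s).
Proof. by apply/existsP; exists s. Qed.

Lemma is_jclassP (J : {set S}) : is_jclass J -> exists s, J = jclass s.
Proof. by case/existsP=> s /eqP->; exists s. Qed.

Lemma eq_jclass (u s : S) : ideal1 u = ideal1 s -> jclass u = jclass s.
Proof. by move=> E; apply/setP=> w; rewrite !inE E. Qed.

Lemma jleP (J' J : {set S}) :
  reflect (forall a b, a \in J' -> b \in J -> leJ a b) (jle J' J).
Proof.
apply: (iffP forall_inP) => [le a b /le /forall_inP le_a /le_a /sub_ideal1P //|le a a_in].
by apply/forall_inP => b b_in; apply/sub_ideal1P/le.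
Qed.

Section JClass.
Variable J : {set S}.
Hypothesis J_jclass : is_jclass J.

Lemma jclass_memP a t : a \in J -> t \in J <-> leJ t a /\ leJ a t.
Proof.
have [s ->] := is_jclassP J_jclass; move=> /mem_jclass [le_as le_sa].
split=> [/mem_jclass [le_ts le_st] | [le_ta le_at]].
  by split; [exact: leJ_trans le_ts le_sa | exact: leJ_trans le_as le_st].
by apply/mem_jclass; split; [exact: leJ_trans le_ta le_as | exact: leJ_trans le_sa le_at].
Qed.

Lemma jclass_leJ a b : a \in J -> b \in J -> leJ a b.
Proof. by move=> a_in /(jclass_memP _ a_in) []. Qed.

Lemma jclass_between z w w' : z \in J -> w' \in J -> leJ w z -> leJ w' w -> w \in J.
Proof.
move=> z_in w'_in le_wz le_w'w; apply/(jclass_memP _ z_in); split => //.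
exact: leJ_trans (jclass_leJ z_in w'_in) le_w'w.
Qed.

Lemma jclass_leR x c : x \in J -> m x c \in J -> leR x (m x c).
Proof. by move=> x_in xc_in; apply: (stabilityR (b := Some c)); last exact: jclass_leJ. Qed.

Lemma jclass_leL c x : x \in J -> m c x \in J -> leL x (m c x).
Proof. by move=> x_in cx_in; apply: (stabilityL (a := Some c)); last exact: jclass_leJ. Qed.

End JClass.

Lemma regular_jclass (J : {set S}) : regular J -> is_jclass J. Proof. by case/andP. Qed.

Lemma jlt_card_ideal1 (u s : S) : jlt (jclass u) (jclass s) -> #|ideal1 u| < #|ideal1 s|.
Proof.
case/andP => /jleP le_us neq_us; apply: proper_card; rewrite properEneq.
have /sub_ideal1P -> : leJ u s by apply: le_us; apply: jclass_refl.
by rewrite andbT; apply: contra neq_us => /eqP/eq_jclass ->.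
Qed.

Lemma jclass_minimal (P : pred {set S}) J0 : is_jclass J0 -> P J0 ->
  exists J, [/\ is_jclass J, P J & forall J', is_jclass J' -> jlt J' J -> ~~ P J'].
Proof.
case/is_jclassP=> s0 -> P0.
case: (@arg_minnP _ s0 (fun s => P (jclass s)) (fun s => #|ideal1 s|) P0) => s Ps min_s.
exists (jclass s); split=> [||J' /is_jclassP [u ->] lt_us]; [exact: is_jclass_jclass|done|].
by apply/negP => /min_s; rewrite leqNgt jlt_card_ideal1.
Qed.

Lemma mem_maxsubgroup g e : leR g e -> leL g e -> leJ e g -> g \in maxsubgroup e.
Proof.
move=> [b Eg] [a Eg'] le_eg; rewrite inE.
rewrite (eq_rideal1 (ex_intro _ b Eg) (stabilityR Eg le_eg)).
by rewrite (eq_lideal1 (ex_intro _ a Eg') (stabilityL Eg' le_eg)) !eqxx.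
Qed.

Lemma maxsubgroup_leJ g e : g \in maxsubgroup e -> leJ g e.
Proof.
rewrite inE => /andP [/eqP Erg _]; apply: leR_leJ.
by apply/rideal1P; rewrite -Erg; apply/rideal1P/leR_refl.
Qed.

Lemma maxsubgroup_mull g e : g \in maxsubgroup e -> m e e = e -> m e g = g.
Proof.
rewrite inE => /andP [/eqP Erg _] idem_e.
have /rideal1P [b Eg] : g \in rideal1 e by rewrite -Erg; apply/rideal1P/leR_refl.
by apply: Some_inj; rewrite -[Some (m e g)]/(Some e ** Some g) Eg omulA /= idem_e.
Qed.

(* Green's lemma: with e = a w1 b, the elements r = a w1 and r' = a w2 are
   R-equivalent and g r = r' for g = a w2 b, so g is J-above e; being also R-
   and L-below e, g lies in the H-class of e by stability. *)
Lemma maxsubgroup_sandwich e w1 w2 : m e e = e -> leJ e w1 -> leJ w1 e ->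
  leR w1 w2 -> leR w2 w1 -> leL w2 w1 -> w1 != w2 ->
  exists a b, [/\ e = m (m a w1) b, m (m a w2) b \in maxsubgroup e
                & m (m a w2) b != e].
Proof.
move=> idem_e [p [q Ee]] le_w1e [k Ew1] [k' Ew2] [l Ew2l] neq_w12.
have [a /esym Ea] := omulSl e p; have [b /esym Eb] := omulSr e q.
exists a, b; set r := m a w1; set r' := m a w2; set g := m r' b.
have Eerb : e = m r b.
  apply: Some_inj; rewrite -[Some (m r b)]/(Some a ** Some w1 ** Some b) Ea Eb.
  transitivity (Some e ** Some e ** Some e); first by rewrite /= !idem_e.
  by rewrite {2}Ee !omulA.
have Eea : m e a = a.
  by apply: Some_inj; rewrite -[Some (m e a)]/(Some e ** Some a) Ea omulA /= idem_e.
have Ebe : m b e = b.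
  by apply: Some_inj; rewrite -[Some (m b e)]/(Some b ** Some e) Eb -omulA /= idem_e.
have Eer : m e r = r by rewrite /r fs_assoc Eea.
have [z Ez] : leL w1 r.
  apply: (stabilityL (a := Some a)) => //; apply: leJ_trans le_w1e _.
  by exists None, (Some b); rewrite Eerb.
have Er' : Some r' = Some a ** l ** z ** Some r.
  by rewrite -[Some r']/(Some a ** Some w2) Ew2l Ez !omulA.
have Egr : m g r = r'.
  apply: Some_inj; rewrite -[Some (m g r)]/(Some r' ** Some b ** Some r) {1}Er'.
  rewrite -(omulA _ (Some r) (Some b)) -[Some r ** Some b]/(Some (m r b)) -Eerb.
  by rewrite -(omulA _ (Some e)) -[Some e ** Some r]/(Some (m e r)) Eer -Er'.
have le_eg : leJ e g.
  apply: (@leJ_trans _ r); first by exists None, (Some b); rewrite Eerb.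
  apply: (@leJ_trans _ r').
    by exists None, k; rewrite -[Some r]/(Some a ** Some w1) Ew1 omulA.
  by exists None, (Some r); rewrite /= Egr.
split=> //.
  apply: mem_maxsubgroup => //; last by exists (Some g); rewrite /= /g -fs_assoc Ebe.
  by exists (Some g); rewrite /= /g /r' !fs_assoc Eea.
apply: contra neq_w12 => /eqP Ege.
have Er'r : r' = r by rewrite -Egr Ege Eer.
have Ew2z : Some w2 = z ** Some r'.
  by rewrite -[Some r']/(Some a ** Some w2) Ew2 {1}Ez -[Some r]/(Some a ** Some w1) !omulA.
by apply/eqP/Some_inj; rewrite Ez Ew2z Er'r.
Qed.

Section EquivRM.
Variable J : {set S}.

Lemma equivRM_refl s : equivRM J s s.
Proof. by apply/forall_inP=> x _; rewrite !eqxx implybT. Qed.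

Lemma equivRM_sym s t : equivRM J s t -> equivRM J t s.
Proof.
move/forall_inP=> eqv; apply/forall_inP=> x x_in.
case/andP: (eqv x x_in) => /eqP mem_eq /implyP val_eq.
by rewrite mem_eq eqxx /=; apply/implyP=> /(etrans mem_eq) /val_eq /eqP->.
Qed.

Lemma equivRM_trans s t u : equivRM J s t -> equivRM J t u -> equivRM J s u.
Proof.
move/forall_inP=> eqv1 /forall_inP eqv2; apply/forall_inP=> x x_in.
case/andP: (eqv1 x x_in) => /eqP mem1 /implyP val1.
case/andP: (eqv2 x x_in) => /eqP mem2 /implyP val2.
rewrite mem1 mem2 eqxx /=; apply/implyP=> xu_in.
have xt_in : m x t \in J by rewrite mem2.
by rewrite (eqP (val1 _)) ?mem1 // (eqP (val2 xt_in)).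
Qed.

Hypothesis J_jclass : is_jclass J.

(* [z ** c] lies J-between [z] and [z w1], hence in J, where the definition
   of [equivRM J u v] applies to it. *)
Lemma equivRM_congr_eq c d u v w1 w2 z : equivRM J u v ->
  Some w1 = c ** Some u ** d -> Some w2 = c ** Some v ** d ->
  z \in J -> m z w1 \in J -> m z w1 = m z w2.
Proof.
move=> /forall_inP eqv Ew1 Ew2 z_in zw1_in.
have [z' /esym Ez'] := omulSl z c.
have Ezw o w : Some w = c ** Some o ** d -> Some (m z w) = Some (m z' o) ** d.
  move=> Ew; rewrite -[Some (m z' o)]/(Some z' ** Some o) Ez'.
  by rewrite -[Some (m z w)]/(Some z ** Some w) Ew !omulA.
have z'_in : z' \in J.
  apply: (jclass_between J_jclass z_in zw1_in); first by exists None, c; rewrite Ez'.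
  by exists None, (Some u ** d); rewrite (Ezw _ _ Ew1) omulA.
have z'u_in : m z' u \in J.
  apply: (jclass_between J_jclass z'_in zw1_in); first by exists None, (Some u).
  by exists None, d; rewrite (Ezw _ _ Ew1).
case/andP: (eqv z' z'_in) => _ /implyP /(_ z'u_in) /eqP Ez'u.
by apply: Some_inj; rewrite (Ezw _ _ Ew1) (Ezw _ _ Ew2) Ez'u.
Qed.

Lemma equivRM_congr c d u v w1 w2 : equivRM J u v ->
  Some w1 = c ** Some u ** d -> Some w2 = c ** Some v ** d -> equivRM J w1 w2.
Proof.
move=> eqv Ew1 Ew2; apply/forall_inP=> z z_in.
case zw1_in: (m z w1 \in J).
  by rewrite -(equivRM_congr_eq eqv Ew1 Ew2 z_in zw1_in) zw1_in !eqxx.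
case zw2_in: (m z w2 \in J) => //.
by rewrite -(equivRM_congr_eq (equivRM_sym eqv) Ew2 Ew1 z_in zw2_in) zw2_in in zw1_in.
Qed.

Lemma equivRM_equivJ s t : equivRM J s t -> equivJ J s t.
Proof.
move=> eqv; apply/forall_inP=> x x_in; apply/forall_inP=> y y_in.
have /forall_inP /(_ x x_in) := equivRM_congr (c := None) (d := Some y) eqv erefl erefl.
by rewrite !fs_assoc.
Qed.

End EquivRM.

Definition equivRM_below (J : {set S}) (s t : S) : Prop :=
  forall J', regular J' -> jlt J' J -> equivRM J' s t.

Lemma equivRM_belowP J s t : reflect (equivRM_below J s t)
  [forall J' : {set S}, (regular J' && jlt J' J) ==> equivRM J' s t].
Proof.
apply: (iffP forallP) => [eqv J' reg lt | eqv J'].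
  by move/implyP: (eqv J'); apply; rewrite reg lt.
by apply/implyP => /andP [reg lt]; apply: eqv.
Qed.

Lemma equivRM_below_sym J s t : equivRM_below J s t -> equivRM_below J t s.
Proof. by move=> eqv J' reg lt; apply/equivRM_sym/eqv. Qed.

Lemma equivRM_below_trans J s t u :
  equivRM_below J s t -> equivRM_below J t u -> equivRM_below J s u.
Proof. by move=> eqv1 eqv2 J' reg lt; apply: equivRM_trans (eqv1 _ _ _) (eqv2 _ _ _). Qed.

Lemma equivRM_below_congr J c d u v w1 w2 : equivRM_below J u v ->
  Some w1 = c ** Some u ** d -> Some w2 = c ** Some v ** d -> equivRM_below J w1 w2.
Proof.
move=> eqv Ew1 Ew2 J' /[dup] reg /andP [J'_jclass _] lt.
exact: (equivRM_congr J'_jclass (eqv J' reg lt) Ew1 Ew2).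
Qed.

Lemma RM_irreducibleP J : reflect
  (regular J /\ exists s t, equivRM_below J s t /\ ~~ equivRM J s t)
  (RM_irreducible J).
Proof.
apply: (iffP andP) => [[reg /existsP [s /existsP [t /andP [/equivRM_belowP eqv neqv]]]] |].
  by split=> //; exists s, t.
case=> reg [s [t [eqv neqv]]]; split=> //.
apply/existsP; exists s; apply/existsP; exists t.
by rewrite neqv andbT; apply/equivRM_belowP.
Qed.

Lemma MJP J e g : reflect (g \in maxsubgroup e /\ equivRM_below J g e) (g \in MJ J e).
Proof. by rewrite [_ \in MJ _ _]inE; apply: (iffP andP) => -[? /equivRM_belowP ?]. Qed.

Lemma rhodes_semisimple_separates (s t : S) : rhodes_semisimple S -> s != t ->
  exists2 J, regular J & ~~ equivJ J s t.
Proof.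
move=> rhodes neq_st.
case: (boolP [exists J : {set S}, regular J && ~~ equivJ J s t]).
  by case/existsP=> J /andP [reg neqv]; exists J.
move/existsPn=> no_sep; case/eqP: neq_st; apply: rhodes => J reg.
by move: (no_sep J); rewrite reg negbK.
Qed.

Lemma not_equivJ_jle (J' J : {set S}) u v : is_jclass J' -> is_jclass J ->
  u \in J -> v \in J -> ~~ equivJ J' u v -> jle J' J.
Proof.
move=> J'_jclass J_jclass u_in v_in /forall_inPn [x x_in /forall_inPn [y y_in bad]].
have [w w_in le_w] : exists2 w, w \in J' & leJ w u \/ leJ w v.
  case xuy_in: (m (m x u) y \in J').
    by exists (m (m x u) y) => //; left; exists (Some x), (Some y).
  case xvy_in: (m (m x v) y \in J') bad; last by rewrite xuy_in.
  by move=> _; exists (m (m x v) y) => //; right; exists (Some x), (Some y).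
apply/jleP => a b a_in b_in; apply: leJ_trans (jclass_leJ J'_jclass a_in w_in) _.
by case: le_w => le_w; apply: leJ_trans le_w (jclass_leJ J_jclass _ b_in).
Qed.

Section Action.
Variables (Omega : finType) (act : Omega -> S -> option Omega).
Hypothesis act_mul : is_partial_act act.

Definition oact (a : Omega) (o : option S) : option Omega :=
  if o is Some s then act a s else Some a.

Lemma oact_mul a o1 o2 : oact a (o1 ** o2) = obind (oact^~ o2) (oact a o1).
Proof. by case: o1 o2 => [s|] [t|] //=; case: (act a s). Qed.

Definition separates (u v : S) : bool := [exists a, act a u != act a v].

Lemma separates_sym u v : separates u v = separates v u.
Proof. by apply/existsP/existsP => -[a]; exists a; rewrite eq_sym. Qed.

Lemma separates_context c d u v w1 w2 :
  Some w1 = c ** Some u ** d -> Some w2 = c ** Some v ** d ->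
  separates w1 w2 -> separates u v.
Proof.
move=> Ew1 Ew2 /existsP [a].
rewrite -[act a w1]/(oact a (Some w1)) -[act a w2]/(oact a (Some w2)).
rewrite Ew1 Ew2 !oact_mul; case: (oact a c) => [b|] //= neq.
by apply/existsP; exists b; apply: contra neq => /eqP ->.
Qed.

Lemma faithful_actP : faithful_act act <-> forall u v, u != v -> separates u v.
Proof.
split=> [faithful u v | sep u v eq_uv].
  by apply: contraNT => /existsPn same; apply/eqP/faithful => a; apply/eqP/negPn/same.
by apply/eqP; apply: contraT => /sep /existsP [a]; rewrite eq_uv eqxx.
Qed.

Hypothesis act_semisimple : semisimple_act act.

Lemma mem_sorbit a : a \in sorbit act a. Proof. by rewrite inE. Qed.

Lemma sorbit_reach a c d : c \in sorbit act a -> d \in sorbit act a ->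
  exists o, oact c o = Some d.
Proof.
rewrite !inE => /eqP Ec /eqP Ed.
have : d \in reachset act c by rewrite Ec -Ed inE eqxx.
by rewrite inE => /orP [/eqP->|/existsP [s /eqP E]]; [exists None | exists (Some s)].
Qed.

Lemma sorbit_act a c s d : c \in sorbit act a -> act c s = Some d -> d \in sorbit act a.
Proof.
move=> c_in Ecs; have /andP [_ /forall_inP inv] := act_semisimple a.
by move/forallP: (inv c c_in) => /(_ s) /forallP /(_ d) /implyP; apply; rewrite Ecs.
Qed.

Lemma sorbit_oact a c o d : c \in sorbit act a -> oact c o = Some d -> d \in sorbit act a.
Proof. by case: o => [s|] /=; [exact: sorbit_act | move=> c_in [<-]]. Qed.

Section Apex.
Variables (a0 : Omega) (J : {set S}).
Hypothesis apex_J : apex act (sorbit act a0) J.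
Local Notation O := (sorbit act a0).

Lemma apex_jclass : is_jclass J. Proof. by case/and3P: apex_J. Qed.

Lemma apex_witness : exists t b, [/\ t \in J, b \in O & act b t != None].
Proof.
case/and3P: apex_J => _ /exists_inP [t t_in /exists_inP [b b_in defined]] _.
by exists t, b.
Qed.

(* Going from the witness [b] to [g] inside the orbit yields z = t o s, which
   acts on [b] and is J-below [t]; minimality of the apex puts z in J. *)
Lemma apex_leJ g s : g \in O -> act g s != None -> forall j, j \in J -> leJ j s.
Proof.
move=> g_in; case Egs: (act g s) => [g'|] // _.
have [t [b [t_in b_in]]] := apex_witness; case Ebt: (act b t) => [b'|] // _.
have [o Eo] := sorbit_reach (sorbit_act b_in Ebt) g_in.
have [z /esym Ez] := omulSr s (Some t ** o).
have Ebz : act b z = Some g'.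
  by rewrite -[act b z]/(oact b (Some z)) Ez !oact_mul /= Ebt /= Eo /= Egs.
have le_zt : leJ z t by exists None, (o ** Some s); rewrite Ez !omulA.
have le_zs : leJ z s by exists (Some t ** o), None; rewrite omulo1 Ez.
have z_in : z \in J.
  suff <- : jclass z = J by exact: jclass_refl.
  case/and3P: apex_J => _ _ /forallP /(_ (jclass z)) /implyP min_J; apply/eqP/min_J.
  rewrite is_jclass_jclass; apply/and3P; split=> //.
    apply/exists_inP; exists z; first exact: jclass_refl.
    by apply/exists_inP; exists b; rewrite ?Ebz.
  apply/jleP => a j /mem_jclass [le_az _] j_in.
  exact: leJ_trans le_az (leJ_trans le_zt (jclass_leJ apex_jclass t_in j_in)).
by move=> j j_in; apply: leJ_trans (jclass_leJ apex_jclass j_in z_in) le_zs.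
Qed.

Lemma apex_act_none g z w : g \in O -> z \in J -> leJ w z -> w \notin J ->
  act g w = None.
Proof.
move=> g_in z_in le_wz; apply: contraNeq => defined.
by apply/(jclass_memP apex_jclass _ z_in); split=> //; apply: apex_leJ defined _ z_in.
Qed.

Lemma apex_act_some z : z \in J -> exists2 g, g \in O & act g z != None.
Proof.
move=> z_in; have [t [b [t_in b_in]]] := apex_witness.
have [p [q Et]] := jclass_leJ apex_jclass t_in z_in.
rewrite -[act b t]/(oact b (Some t)) Et !oact_mul.
case Ep: (oact b p) => [g|] //= defined; exists g; first exact: sorbit_oact b_in Ep.
by move: defined; case: (act g z).
Qed.

Lemma apex_equivRM s t g : equivRM J s t -> g \in O -> act g s = act g t.
Proof.
move=> eqv g_in; have [t0 [b [t0_in b_in]]] := apex_witness.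
case Ebt: (act b t0) => [b'|] // _.
have [o Eo] := sorbit_reach (sorbit_act b_in Ebt) g_in.
have [z /esym Ez] := omulSl t0 o.
have Ebz : act b z = Some g.
  by rewrite -[act b z]/(oact b (Some z)) Ez !oact_mul /= Ebt /= Eo.
have z_in : z \in J.
  apply/(jclass_memP apex_jclass _ t0_in); split; first by exists None, o.
  by apply: apex_leJ b_in _ _ t0_in; rewrite Ebz.
have act_g u : act g u = act b (m z u) by rewrite act_mul Ebz.
case/andP: (forall_inP eqv z z_in) => /eqP mem_eq /implyP val_eq.
rewrite !act_g; case zs_in: (m z s \in J); first by rewrite (eqP (val_eq zs_in)).
rewrite !(apex_act_none b_in z_in) -?mem_eq ?zs_in //.
- by exists None, (Some t).
- by exists None, (Some s).
Qed.

Lemma apex_separates z w1 w2 : z \in J -> leJ w1 z -> leJ w2 z ->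
  (w1 \in J) != (w2 \in J) -> separates w1 w2.
Proof.
wlog w1_in : w1 w2 / w1 \in J => [hwlog z_in le_w1 le_w2 neq_mem|].
  case: (boolP (w1 \in J)) => [w1_in|w1_out]; first exact: hwlog.
  have w2_in : w2 \in J by move: neq_mem; rewrite (negbTE w1_out); case: (w2 \in J).
  by rewrite separates_sym; apply: hwlog; rewrite // eq_sym.
move=> z_in _ le_w2; rewrite w1_in; case: (boolP (w2 \in J)) => [_|w2_out] // _.
have [g g_in defined] := apex_act_some w1_in.
apply/existsP; exists g; rewrite (apex_act_none g_in w1_in _ w2_out) //.
exact: leJ_trans le_w2 (jclass_leJ apex_jclass z_in w1_in).
Qed.

Lemma apex_act_none_of_not_jle J' z w g : is_jclass J' -> ~~ jle J J' ->
  z \in J' -> leJ w z -> g \in O -> act g w = None.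
Proof.
move=> J'_jclass not_le z_in le_wz g_in; apply: contraNeq not_le => defined.
apply/jleP => j j' j_in j'_in; apply: leJ_trans (apex_leJ g_in defined j_in) _.
exact: leJ_trans le_wz (jclass_leJ J'_jclass z_in j'_in).
Qed.

End Apex.

Lemma act_spow c k n : act c k = Some c -> act c (spow k n) = Some c.
Proof. by move=> fix_c; elim: n => [|n IHn] //; rewrite spowS act_mul IHn /= fix_c. Qed.

Lemma exists_regular_apex a : exists2 J, apex act (sorbit act a) J & regular J.
Proof.
set O := sorbit act a.
have /andP [/exists_inP [c c_in /existsP [s0 /exists_inP [d _ /eqP Ecd]]] _] :=
  act_semisimple a.
have nontriv0 : acts_nontrivially act O (jclass s0).
  apply/exists_inP; exists s0; first exact: jclass_refl.
  by apply/exists_inP; exists c; rewrite ?Ecd.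
have [J [J_jclass nontriv min_J]] := jclass_minimal (is_jclass_jclass s0) nontriv0.
have apex_J : apex act O J.
  apply/and3P; split=> //; apply/forallP => J'.
  apply/implyP => /and3P [J'_jclass nontriv' le_J'J].
  by apply: (contraTT _ nontriv') => neq; apply: min_J; rewrite // /jlt le_J'J neq.
exists J => //; apply/andP; split=> //.
case/exists_inP: nontriv => s1 s1_in /exists_inP [c1 c1_in].
case E1: (act c1 s1) => [d1|] // _.
have [o Eo] := sorbit_reach (sorbit_act c1_in E1) c1_in.
have [k /esym Ek] := omulSl s1 o.
have fix_c1 : act c1 k = Some c1.
  by rewrite -[act c1 k]/(oact c1 (Some k)) Ek !oact_mul /= E1 /= Eo.
have [n idem] := idempotent_spow k.
apply/exists_inP; exists (spow k n); last by rewrite idem.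
apply/(jclass_memP J_jclass _ s1_in); split.
  by apply: leJ_trans (leJ_spow k n) _; exists None, o.
by apply: (apex_leJ apex_J c1_in _ s1_in); rewrite act_spow.
Qed.

Lemma act_eq_of_apex_neq a JO J s t z : apex act (sorbit act a) JO -> regular JO ->
  JO != J -> is_jclass J -> equivRM_below J s t -> z \in J -> leJ s z -> leJ t z ->
  act a s = act a t.
Proof.
move=> apex_JO reg_JO neq_JO J_jclass eqv z_in le_sz le_tz.
case le_JOJ: (jle JO J).
  by apply: (apex_equivRM apex_JO) (mem_sorbit a); apply: eqv; rewrite // /jlt le_JOJ.
have none w : leJ w z -> act a w = None.
  move=> le_wz; apply: (apex_act_none_of_not_jle apex_JO J_jclass _ z_in le_wz).
    by rewrite le_JOJ.
  exact: mem_sorbit.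
by rewrite !none.
Qed.

Lemma separates_of_faithful_MJ J e x y u v : is_jclass J -> e \in J -> m e e = e ->
  x \in J -> y \in J -> m (m x u) y \in J -> m (m x v) y \in J ->
  m (m x u) y != m (m x v) y -> equivRM_below J u v ->
  faithful_on act (MJ J e) (OmegaJ_e act J e) -> separates u v.
Proof.
move=> J_jclass e_in idem_e x_in y_in w1_in w2_in neq_w eqv faithful.
have le_xR w : m (m x w) y \in J -> leR x (m (m x w) y).
  by rewrite -fs_assoc; apply: jclass_leR.
have le_Rx w : leR (m (m x w) y) x by exists (Some (m w y)); rewrite /= fs_assoc.
have le_yL w : m (m x w) y \in J -> leL y (m (m x w) y) by apply: jclass_leL.
have [a [b [Ee g_in neq_ge]]] := maxsubgroup_sandwich idem_e
  (jclass_leJ J_jclass e_in w1_in) (jclass_leJ J_jclass w1_in e_in)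
  (leR_trans (le_Rx u) (le_xR v w2_in)) (leR_trans (le_Rx v) (le_xR u w1_in))
  (leL_trans (ex_intro _ (Some (m x v)) erefl) (le_yL u w1_in)) neq_w.
set g := m (m a _) b in g_in neq_ge.
have Ee' : Some e = Some (m a x) ** Some u ** Some (m y b) by rewrite {1}Ee /= !fs_assoc.
have Eg : Some g = Some (m a x) ** Some v ** Some (m y b) by rewrite /g /= !fs_assoc.
have gM : g \in MJ J e.
  by apply/MJP; split=> //; apply/equivRM_below_sym/(equivRM_below_congr eqv Ee' Eg).
have eM : e \in MJ J e by apply/MJP; split=> [|J' _ _]; rewrite ?inE ?eqxx ?equivRM_refl.
have [be be_in neq_act] : exists2 be, be \in OmegaJ_e act J e & act be g != act be e.
  apply/exists_inP; apply: contraNT neq_ge => /exists_inPn same; apply/eqP.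
  by apply: faithful => // b' /same /negPn /eqP.
move: be_in; rewrite inE => /exists_inP [al al_in /eqP Eal].
have act_al_g : act al g = act be g.
  by rewrite -{1}(maxsubgroup_mull g_in idem_e) act_mul Eal.
have act_al_e : act al e = act be e by rewrite -{1}idem_e act_mul Eal.
rewrite separates_sym; apply: separates_context Eg Ee' _.
by apply/existsP; exists al; rewrite act_al_g act_al_e.
Qed.

Lemma separates_of_not_equivJ a0 J e u v : apex act (sorbit act a0) J ->
  e \in J -> m e e = e -> faithful_on act (MJ J e) (OmegaJ_e act J e) ->
  equivRM_below J u v -> ~~ equivJ J u v -> separates u v.
Proof.
move=> apex_J e_in idem_e faithful eqv /forall_inPn [x x_in /forall_inPn [y y_in bad]].
case: (boolP ((m (m x u) y \in J) == (m (m x v) y \in J))) => [/eqP mem_eq | neq_mem].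
  move: bad; rewrite mem_eq eqxx /= negb_imply => /andP [w2_in neq_w].
  have w1_in : m (m x u) y \in J by rewrite mem_eq.
  exact: separates_of_faithful_MJ (apex_jclass apex_J) e_in idem_e x_in y_in
    w1_in w2_in neq_w eqv faithful.
have ctx w : Some (m (m x w) y) = Some x ** Some w ** Some y by [].
have le_x w : leJ (m (m x w) y) x by exists None, (Some (m w y)); rewrite /= fs_assoc.
apply: (separates_context (ctx u) (ctx v)).
exact: (apex_separates apex_J x_in (le_x u) (le_x v) neq_mem).
Qed.

Lemma separates_of_not_equivRM a0 J e s t : rhodes_semisimple S ->
  apex act (sorbit act a0) J -> e \in J -> m e e = e ->
  faithful_on act (MJ J e) (OmegaJ_e act J e) ->
  equivRM_below J s t -> ~~ equivRM J s t -> separates s t.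
Proof.
move=> rhodes apex_J e_in idem_e faithful eqv /forall_inPn [x x_in bad].
have J_jclass := apex_jclass apex_J.
have ctx w : Some (m x w) = Some x ** Some w ** None by [].
apply: separates_context (ctx s) (ctx t) _.
case: (boolP ((m x s \in J) == (m x t \in J))) => [/eqP mem_eq | neq_mem]; last first.
  apply: (apex_separates apex_J x_in _ _ neq_mem).
  - by exists None, (Some s).
  - by exists None, (Some t).
move: bad; rewrite mem_eq eqxx /= negb_imply => /andP [xt_in neq_x].
have xs_in : m x s \in J by rewrite mem_eq.
have eqv_x := equivRM_below_congr eqv (ctx s) (ctx t).
have [J' reg' neqv'] := rhodes_semisimple_separates rhodes neq_x.
have le_J'J := not_equivJ_jle (regular_jclass reg') J_jclass xs_in xt_in neqv'.
have eq_J' : J' = J.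
  apply/eqP; apply: contraNT neqv' => neq_J'.
  by apply: (equivRM_equivJ (regular_jclass reg')); apply: eqv_x; rewrite // /jlt le_J'J.
rewrite eq_J' in neqv'.
exact: separates_of_not_equivJ apex_J e_in idem_e faithful eqv_x neqv'.
Qed.

Section ApexConditions.
Variable e : {set S} -> S.
Hypothesis e_idem : forall J : {set S}, regular J -> e J \in J /\ m (e J) (e J) = e J.

Lemma faithful_OmegaJ_MJ : faithful_act act ->
  forall J, RM_irreducible J ->
    OmegaJ act J != set0 /\ faithful_on act (MJ J (e J)) (OmegaJ_e act J (e J)).
Proof.
move=> faithful J /RM_irreducibleP [reg [s [t [eqv neqv]]]].
have J_jclass := regular_jclass reg; have [e_in idem_e] := e_idem reg.
split.
  move: neqv => /forall_inPn [x x_in bad].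
  have neq_x : m x s != m x t by apply: contra bad => /eqP ->; rewrite !eqxx implybT.
  have /existsP [a sep] := (faithful_actP.1 faithful) _ _ neq_x.
  have [JO apex_JO reg_JO] := exists_regular_apex a.
  have [eq_JO | neq_JO] := eqVneq JO J; first by apply/set0Pn; exists a; rewrite inE -eq_JO.
  have ctx w : Some (m x w) = Some x ** Some w ** None by [].
  exfalso; move/eqP: sep; apply; apply: (act_eq_of_apex_neq apex_JO reg_JO neq_JO J_jclass
    (equivRM_below_congr eqv (ctx s) (ctx t)) x_in).
  - by exists None, (Some s).
  - by exists None, (Some t).
move=> g h /MJP [g_in eqv_g] /MJP [h_in eqv_h] same; apply: faithful => a.
have [JO apex_JO reg_JO] := exists_regular_apex a.
have [eq_JO | neq_JO] := eqVneq JO J.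
  rewrite -(maxsubgroup_mull g_in idem_e) -(maxsubgroup_mull h_in idem_e) !act_mul.
  case Eae: (act a (e J)) => [b|] //=; apply: same.
  by rewrite inE; apply/exists_inP; exists a; rewrite ?Eae // inE -eq_JO.
apply: (act_eq_of_apex_neq apex_JO reg_JO neq_JO J_jclass
  (equivRM_below_trans eqv_g (equivRM_below_sym eqv_h)) e_in); exact: maxsubgroup_leJ.
Qed.

Lemma OmegaJ_MJ_faithful : rhodes_semisimple S ->
  (forall J, RM_irreducible J ->
    OmegaJ act J != set0 /\ faithful_on act (MJ J (e J)) (OmegaJ_e act J (e J))) ->
  faithful_act act.
Proof.
move=> rhodes cond; apply/faithful_actP => s t neq.
have [J0 reg0 neqv0] := rhodes_semisimple_separates rhodes neq.
have P0 : regular J0 && ~~ equivRM J0 s t.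
  by rewrite reg0; apply: contra neqv0; apply: equivRM_equivJ; apply: regular_jclass.
have [J [_ /andP [reg neqv] min_J]] :=
  jclass_minimal (P := fun J => regular J && ~~ equivRM J s t) (regular_jclass reg0) P0.
have eqv : equivRM_below J s t.
  by move=> J' reg' lt; move: (min_J J' (regular_jclass reg') lt); rewrite reg' negbK.
have irr : RM_irreducible J by apply/RM_irreducibleP; split=> //; exists s, t.
have [/set0Pn [a0 a0_in] faithful] := cond J irr.
have [e_in idem_e] := e_idem reg.
move: a0_in; rewrite inE => apex_J.
exact: separates_of_not_equivRM rhodes apex_J e_in idem_e faithful eqv neqv.
Qed.

End ApexConditions.
End Action.

End Semigroup.

Theorem theorem2p4 (S : fsemigroup) (e : {set S} -> S)
  (he : forall J : {set S}, regular J -> e J \in J /\ fs_mul (e J) (e J) = e J)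
  (Omega : finType) (act : Omega -> S -> option Omega)
  (hact : is_partial_act act)
  (hS : rhodes_semisimple S) (hOmega : semisimple_act act) :
  faithful_act act <->
  (forall J : {set S}, RM_irreducible J ->
     OmegaJ act J != set0 /\ faithful_on act (MJ J (e J)) (OmegaJ_e act J (e J))).
Proof.
split; first exact: faithful_OmegaJ_MJ.
exact: OmegaJ_MJ_faithful.
Qed.
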